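(* Let $K$ be a field, $I$ a monomial ideal in $R=K[x_1,\ldots,x_n]$, and $1\le j\le n$. If $I$ has the copersistence property, then the contraction $I/x_j$ has the copersistence property.
   Context: An ideal $I$ in a commutative Noetherian ring $R$ has the copersistence property if $\mathrm{Ass}_R(R/I^k)\supseteq\mathrm{Ass}_R(R/I^{k+1})$ for all $k\ge1$. If $\{u_1,\ldots,u_m\}$ is the minimal monomial generating set of $I$, the contraction $I/x_j$ is the monomial ideal (in the polynomial ring over $K$ in the variables other than $x_j$) generated by the monomials obtained from $u_1,\ldots,u_m$ by setting $x_j=1$. *)

From HB Require Import structures.
From mathcomp Require Import all_boot all_order all_algebra.
From mathcomp Require Import mpoly.
Set Implicit Arguments. Unset Strict Implicit. Unset Printing Implicit Defensive.
Import GRing.Theory.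
Local Open Scope ring_scope.

Section IdealDefs.
Variables (K : fieldType) (n : nat).
Local Notation R := {mpoly K[n]}.

Definition is_ideal (I : R -> Prop) : Prop :=
  I 0 /\ (forall a b, I a -> I b -> I (a + b)) /\ (forall r a, I a -> I (r * a)).

Definition is_prime_ideal (P : R -> Prop) : Prop :=
  is_ideal P /\ ~ P 1 /\ (forall a b, P (a * b) -> P a \/ P b).

Definition ideal_gen (S : R -> Prop) : R -> Prop := fun f =>
  exists (m : nat) (c g : 'I_m -> R),
    (forall i, S (g i)) /\ f = \sum_(i < m) c i * g i.

Definition ideal_pow (I : R -> Prop) (k : nat) : R -> Prop :=
  ideal_gen (fun f => exists g : 'I_k -> R,
                       (forall i, I (g i)) /\ f = \prod_(i < k) g i).

Definition colon (J : R -> Prop) (f : R) : R -> Prop := fun g => J (g * f).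

(* Ass_R(R/J): primes P equal to an annihilator (J : f) of an element of R/J. *)
Definition Ass (J : R -> Prop) (P : R -> Prop) : Prop :=
  is_prime_ideal P /\ exists f : R, forall g, P g <-> colon J f g.

Definition copersistent (I : R -> Prop) : Prop :=
  forall k : nat, (1 <= k)%N ->
    forall P, Ass (ideal_pow I k.+1) P -> Ass (ideal_pow I k) P.

Definition monomial_ideal (s : seq 'X_{1..n}) : R -> Prop :=
  ideal_gen (fun f => exists2 m, m \in s & f = 'X_[m]).

Definition mdivides (a b : 'X_{1..n}) : bool := [forall i, a i <= b i]%N.

Definition minimal_monomial_gens (I : R -> Prop) (s : seq 'X_{1..n}) : Prop :=
  (forall f, I f <-> monomial_ideal s f) /\ uniq s /\
  (forall a b, a \in s -> b \in s -> mdivides a b -> a = b).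
End IdealDefs.

(* Setting x_j = 1 in a monomial of K[x_0..x_n] gives a monomial in the
   remaining n variables (indexed by lift j). *)
Definition mnm_contract (n : nat) (j : 'I_n.+1) (m : 'X_{1..n.+1}) : 'X_{1..n} :=
  [multinom m (lift j i) | i < n].

(* The contraction I/x_j, computed from the minimal monomial generators s of I. *)
Definition contraction (K : fieldType) (n : nat) (j : 'I_n.+1)
    (s : seq 'X_{1..n.+1}) : {mpoly K[n]} -> Prop :=
  @monomial_ideal K n (map (mnm_contract j) s).

From HB Require Import structures.
From mathcomp Require Import all_boot all_order all_algebra.
From mathcomp Require Import mpoly.
From Stdlib Require Import Classical.
Import GRing.Theory.
Local Open Scope ring_scope.
Set Implicit Arguments. Unset Strict Implicit.

(* Write R = K[x_0..x_n] as S[x_j], S the polynomial ring in the other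
   variables, and for an ideal P of S let PR (ext_ideal P) be the ideal of
   polynomials whose x_j-coefficients all lie in P.  With J = I/x_j and N the
   largest x_j-exponent of a generator of I, one has
   J^k R * x_j^(kN) <= I^k <= J^k R.  Hence P = (J^k : f) gives
   PR = (I^k : f x_j^(kN)), and conversely PR = (I^k : g) makes P the
   intersection of the finitely many colons (J^k : g_e) over the
   x_j-coefficients g_e of g, so that the prime P is one of them.  As PR is
   prime when P is, Ass(R/I^(k+1)) <= Ass(R/I^k) transfers to J. *)

Lemma classical_ex_min (Q : nat -> Prop) e :
  Q e -> exists e0, Q e0 /\ forall i, (i < e0)%N -> ~ Q i.
Proof.
elim: e {-2}e (leqnn e) => [|N IH] e le_eN Qe.
  by move: le_eN Qe; rewrite leqn0 => /eqP -> Q0; exists 0%N.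
have [[i [lt_ie Qi]] | no_smaller] := classic (exists i, (i < e)%N /\ Q i).
  by apply: (IH i) => //; rewrite -ltnS (leq_trans lt_ie le_eN).
by exists e; split=> // i lt_ie Qi; apply: no_smaller; exists i.
Qed.

Section Ideals.
Variables (K : fieldType) (m : nat).
Local Notation R := {mpoly K[m]}.
Implicit Types (A G J P : R -> Prop) (x y r : R).

Section IdealTheory.
Variable A : R -> Prop.
Hypothesis A_ideal : is_ideal A.

Lemma ideal0 : A 0. Proof. by case: A_ideal. Qed.

Lemma idealD x y : A x -> A y -> A (x + y).
Proof. by case: A_ideal => _ [+ _]; apply. Qed.

Lemma idealMl r x : A x -> A (r * x).
Proof. by case: A_ideal => _ [_]; apply. Qed.

Lemma idealB x y : A x -> A y -> A (x - y).
Proof. by move=> Ax Ay; rewrite -mulN1r; apply/idealD/idealMl. Qed.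

Lemma idealMr r x : A x -> A (x * r).
Proof. by rewrite mulrC; apply: idealMl. Qed.

Lemma ideal_sum (I : Type) (s : seq I) (Q : pred I) (F : I -> R) :
  (forall i, Q i -> A (F i)) -> A (\sum_(i <- s | Q i) F i).
Proof. by move=> AF; apply: big_ind => //; [apply: ideal0 | apply: idealD]. Qed.

End IdealTheory.

Lemma is_ideal_iff A B : (forall x, A x <-> B x) -> is_ideal A -> is_ideal B.
Proof.
move=> AB [A0 [AD AM]]; split; first exact/AB.
by split=> [x y /AB Ax /AB Ay | r x /AB Ax]; apply/AB; [apply: AD | apply: AM].
Qed.

Lemma ideal_gen_is_ideal G : is_ideal (ideal_gen G).
Proof.
split; last split.
- by exists 0%N, (fun _ => 0), (fun _ => 0); split; [case | rewrite big_ord0].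
- move=> _ _ [m1 [c1 [g1 [Gg1 ->]]]] [m2 [c2 [g2 [Gg2 ->]]]].
  pose glue T (f1 : 'I_m1 -> T) (f2 : 'I_m2 -> T) i :=
    match split i with inl i1 => f1 i1 | inr i2 => f2 i2 end.
  exists (m1 + m2)%N, (glue _ c1 c2), (glue _ g1 g2); split.
    by move=> i; rewrite /glue; case: (split i).
  rewrite big_split_ord /glue; congr (_ + _); apply: eq_bigr => i _.
    by rewrite (unsplitK (inl _ i)).
  by rewrite (unsplitK (inr _ i)).
- move=> r _ [m1 [c1 [g1 [Gg1 ->]]]]; exists m1, (fun i => r * c1 i), g1.
  by split=> //; rewrite mulr_sumr; apply: eq_bigr => i _; rewrite mulrA.
Qed.

Lemma mem_ideal_gen G x : G x -> ideal_gen G x.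
Proof.
by move=> Gx; exists 1%N, (fun _ => 1), (fun _ => x); rewrite big_ord1 mul1r.
Qed.

Lemma ideal_gen_min G A :
  is_ideal A -> (forall x, G x -> A x) -> forall x, ideal_gen G x -> A x.
Proof.
move=> A_ideal GA _ [m1 [c1 [g1 [Gg1 ->]]]].
by apply: ideal_sum => // i _; apply: idealMl => //; apply: GA.
Qed.

Lemma ideal_pow_is_ideal J k : is_ideal (ideal_pow J k).
Proof. exact: ideal_gen_is_ideal. Qed.

Lemma colon_is_ideal J f : is_ideal J -> is_ideal (colon J f).
Proof.
move=> J_ideal; rewrite /colon; split; last split.
- by rewrite mul0r; apply: ideal0.
- by move=> x y Jx Jy; rewrite mulrDl; apply: idealD.
- by move=> r x Jx; rewrite -mulrA; apply: idealMl.
Qed.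

Lemma ideal_pow_prod J k (g : 'I_k -> R) :
  (forall i, J (g i)) -> ideal_pow J k (\prod_(i < k) g i).
Proof. by move=> Jg; apply: mem_ideal_gen; exists g. Qed.

Lemma ideal_pow0 J : ideal_pow J 0 1.
Proof. by have := @ideal_pow_prod J 0 (fun=> 0); rewrite big_ord0; apply; case. Qed.

Lemma ideal_powSr J k x y : ideal_pow J k x -> J y -> ideal_pow J k.+1 (x * y).
Proof.
move=> + Jy; apply: (ideal_gen_min (colon_is_ideal _ (ideal_pow_is_ideal _ _))).
move=> _ [g [Jg ->]]; rewrite /colon.
pose gy l := if unlift ord_max l is Some i then g i else y.
have -> : \prod_(i < k) g i * y = \prod_(l < k.+1) gy l.
  rewrite big_ord_recr /gy unlift_none; congr (_ * _); apply: eq_bigr => i _.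
  rewrite (_ : widen_ord _ i = lift ord_max i) ?liftK //.
  by apply: val_inj; rewrite /= /bump leqNgt ltn_ord.
by apply: ideal_pow_prod => l; rewrite /gy; case: unlift.
Qed.

Section PrimeIdeal.
Variable P : R -> Prop.
Hypothesis P_prime : is_prime_ideal P.

Lemma prime_ideal_coefM (p q : {poly R}) :
  (forall e, P (p * q)`_e) -> (forall e, P p`_e) \/ (forall e, P q`_e).
Proof.
have [P_ideal [_ P_mul]] := P_prime.
move=> Ppq; apply: NNPP => /not_or_and [/not_all_ex_not [a pa] /not_all_ex_not [b qb]].
have [{}a [{}pa P_pi]] := @classical_ex_min (fun i => ~ P p`_i) a pa.
have [{}b [{}qb P_qi]] := @classical_ex_min (fun i => ~ P q`_i) b qb.
have lt_a_ab : (a < (a + b).+1)%N by rewrite ltnS leq_addr.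
have := Ppq (a + b)%N; rewrite coefM (bigD1 (Ordinal lt_a_ab)) //= addKn.
set rest := \sum_(i | _) _ => P_sum.
have P_rest : P rest.
  apply: ideal_sum => // i /eqP ne_ia; have [lt_ia|lt_ai|eq_ia] := ltngtP i a.
  - by apply: idealMr => //; apply: NNPP; apply: P_pi.
  - apply: idealMl => //; apply: NNPP; apply: P_qi.
    by rewrite ltn_subLR ?ltn_add2r // -ltnS.
  - by case: ne_ia; apply: val_inj.
have : P (p`_a * q`_b) by rewrite -(addrK rest (_ * _)); apply: idealB.
by case/P_mul.
Qed.

Lemma prime_ideal_avoid (A : nat -> R -> Prop) N :
  (forall e, is_ideal (A e)) ->
  (forall e, (e < N)%N -> exists2 c, A e c & ~ P c) ->
  exists2 c, ~ P c & forall e, (e < N)%N -> A e c.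
Proof.
have [_ [P1 P_mul]] := P_prime.
move=> A_ideal; elim: N => [|N IH] outside; first by exists 1.
have [c Pc Ac] := IH (fun e lt_eN => outside e (ltnW lt_eN)).
have [c' Ac' Pc'] := outside N (ltnSn N).
exists (c * c'); first by case/P_mul.
move=> e; rewrite ltnS leq_eqVlt => /predU1P [-> | lt_eN].
  exact: idealMl (A_ideal N) _ _ Ac'.
exact: idealMr (A_ideal e) _ _ (Ac e lt_eN).
Qed.

Lemma prime_ideal_cap_eq (A : nat -> R -> Prop) N :
  (forall e, is_ideal (A e)) ->
  (forall c, P c <-> forall e, (e < N)%N -> A e c) ->
  exists2 e, (e < N)%N & forall c, P c <-> A e c.
Proof.
move=> A_ideal P_cap; apply: NNPP => no_e.
have outside e : (e < N)%N -> exists2 c, A e c & ~ P c.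
  move=> lt_eN; apply: NNPP => inside; apply: no_e; exists e => // c.
  split=> [/P_cap Pc | Ac]; first exact: Pc.
  by apply: NNPP => Pc; apply: inside; exists c.
have [c Pc Ac] := prime_ideal_avoid A_ideal outside.
exact/Pc/P_cap.
Qed.

End PrimeIdeal.

End Ideals.

Lemma rmorph_preim_ideal (K : fieldType) (m1 m2 : nat)
    (f : {rmorphism {mpoly K[m1]} -> {mpoly K[m2]}}) (A : {mpoly K[m2]} -> Prop) :
  is_ideal A -> is_ideal (fun c => A (f c)).
Proof.
move=> A_ideal; split; last split.
- by rewrite rmorph0; apply: ideal0.
- by move=> x y Ax Ay; rewrite rmorphD; apply: idealD.
- by move=> r x Ax; rewrite rmorphM; apply: idealMl.
Qed.

Lemma mpoly_rmorph_eq (R : nzRingType) (m : nat) (A : comNzRingType)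
    (F G : {rmorphism {mpoly R[m]} -> A}) :
  (forall c, F c%:MP = G c%:MP) -> (forall i, F 'X_i = G 'X_i) -> F =1 G.
Proof.
move=> FGC FGX p; rewrite [p]mpolyE !rmorph_sum; apply: eq_bigr => a _.
rewrite -mul_mpolyC !rmorphM FGC mpolyXE_id !rmorph_prod; congr (_ * _).
by apply: eq_bigr => i _; rewrite !rmorphXn FGX.
Qed.

Section CoefficientsInXj.
Variables (K : fieldType) (n : nat) (j : 'I_n.+1).
Local Notation S := {mpoly K[n]}.
Local Notation R := {mpoly K[n.+1]}.

Definition liftj (c : S) : R := mmap (@mpolyC _ K) (fun i => 'X_(lift j i)) c.
HB.instance Definition _ :=
  GRing.RMorphism.copy liftj (mmap (@mpolyC _ K) (fun i => 'X_(lift j i))).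

Definition polyj_var (i : 'I_n.+1) : {poly S} :=
  if unlift j i is Some i' then ('X_i')%:P else 'X.

Definition polyj (p : R) : {poly S} := mmap (polyC \o @mpolyC _ K) polyj_var p.
HB.instance Definition _ :=
  GRing.RMorphism.copy polyj (mmap (polyC \o @mpolyC _ K) polyj_var).

Definition unpolyj (p : {poly S}) : R := (map_poly liftj p).['X_j].
HB.instance Definition _ :=
  GRing.RMorphism.copy unpolyj (horner_eval 'X_j \o map_poly liftj).

Lemma polyjD p q : polyj (p + q) = polyj p + polyj q.
Proof. exact: rmorphD. Qed.

Lemma polyjM p q : polyj (p * q) = polyj p * polyj q.
Proof. exact: rmorphM. Qed.

Lemma polyjC c : polyj c%:MP = (c%:MP)%:P.
Proof. exact: mmapC. Qed.

Lemma polyjX i : polyj 'X_i = polyj_var i.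
Proof. by rewrite /polyj mmapX mmap1U. Qed.

Lemma liftjX i : liftj 'X_i = 'X_(lift j i).
Proof. by rewrite /liftj mmapX mmap1U. Qed.

Lemma polyj_liftj c : polyj (liftj c) = c%:P.
Proof.
apply: (@mpoly_rmorph_eq _ _ _ (polyj \o liftj) polyC) => [c'|i] /=.
  by rewrite /liftj mmapC polyjC.
by rewrite [liftj _]liftjX polyjX /polyj_var liftK.
Qed.

Lemma polyjK : cancel polyj unpolyj.
Proof.
apply: (@mpoly_rmorph_eq _ _ _ (unpolyj \o polyj) idfun) => [c|i] /=.
  by rewrite polyjC /unpolyj map_polyC hornerC /= /liftj mmapC.
rewrite polyjX /polyj_var /unpolyj; case: unliftP => [i'|] -> /=.
  by rewrite map_polyC hornerC; apply: liftjX.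
by rewrite map_polyX hornerX.
Qed.

Lemma polyjXj e : polyj ('X_j ^+ e) = 'X^e.
Proof.
have -> : polyj ('X_j ^+ e) = polyj 'X_j ^+ e by apply: rmorphXn.
by rewrite polyjX /polyj_var unlift_none.
Qed.

Lemma polyj_mono (a : 'X_{1..n.+1}) :
  polyj 'X_[a] = ('X_[mnm_contract j a])%:P * 'X^(a j).
Proof.
rewrite /polyj mmapX /mmap1 (bigD1_ord j) //= /polyj_var unlift_none mulrC.
congr (_ * _); rewrite mpolyXE_id rmorph_prod; apply: eq_bigr => i _.
by rewrite liftK rmorphXn /= mnmE.
Qed.

Lemma liftj_mono (a : 'X_{1..n.+1}) :
  liftj 'X_[mnm_contract j a] * 'X_j ^+ (a j) = 'X_[a].
Proof.
rewrite /liftj mmapX /mmap1 [RHS]mpolyXE_id (bigD1_ord j) //= mulrC.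
by congr (_ * _); apply: eq_bigr => i _; rewrite mnmE.
Qed.

Definition ext_ideal (A : S -> Prop) : R -> Prop :=
  fun h => forall e, A (polyj h)`_e.

Lemma ext_ideal_is_ideal A : is_ideal A -> is_ideal (ext_ideal A).
Proof.
move=> A_ideal; split; last split.
- by move=> e; rewrite rmorph0 coef0; apply: ideal0.
- by move=> x y Ax Ay e; rewrite polyjD coefD; apply: idealD (Ax e) (Ay e).
- move=> r x Ax e; rewrite polyjM coefM.
  by apply: ideal_sum => // i _; apply: idealMl (Ax _).
Qed.

Lemma ext_ideal_prime P : is_prime_ideal P -> is_prime_ideal (ext_ideal P).
Proof.
move=> P_prime; have [P_ideal [P1 _]] := P_prime.
split; [exact: ext_ideal_is_ideal | split].
  by move/(_ 0%N); rewrite rmorph1 coef1.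
by move=> x y; rewrite /ext_ideal polyjM; apply: prime_ideal_coefM.
Qed.

Lemma ext_idealMXj A g N :
  A 0 -> ext_ideal A (g * 'X_j ^+ N) <-> ext_ideal A g.
Proof.
move=> A0; rewrite /ext_ideal polyjM polyjXj.
split=> Ag e; last by rewrite coefMXn; case: ltnP.
by have := Ag (e + N)%N; rewrite coefMXn ltnNge leq_addl addnK.
Qed.

Lemma ext_idealMliftj A c g :
  ext_ideal A (liftj c * g) <-> forall e, A (c * (polyj g)`_e).
Proof.
rewrite /ext_ideal polyjM polyj_liftj.
by split=> Ag e; have := Ag e; rewrite coefCM.
Qed.

Lemma ext_ideal_liftj A c : A 0 -> ext_ideal A (liftj c) <-> A c.
Proof.
move=> A0; rewrite /ext_ideal polyj_liftj.
split=> [/(_ 0%N) | Ac e]; first by rewrite coefC.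
by rewrite coefC; case: eqP.
Qed.

End CoefficientsInXj.

Section Contraction.
Variables (K : fieldType) (n : nat) (j : 'I_n.+1) (s : seq 'X_{1..n.+1}).
Variable I : {mpoly K[n.+1]} -> Prop.
Hypothesis I_gen : forall f, I f <-> monomial_ideal s f.
Local Notation J := (@contraction K n j s).
Local Notation liftj := (liftj j).
Local Notation polyj := (polyj j).
Local Notation ext_ideal := (ext_ideal j).

Let N := (\max_(a <- s) a j)%N.

Let I_ideal : is_ideal I.
Proof. exact: is_ideal_iff (fun f => iff_sym (I_gen f)) (ideal_gen_is_ideal _). Qed.

Lemma ideal_sub_ext_contraction x : I x -> ext_ideal J x.
Proof.
move=> /I_gen; apply: (ideal_gen_min (A := ext_ideal J)).
  exact: ext_ideal_is_ideal (ideal_gen_is_ideal _).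
move=> _ [a a_s ->] e; rewrite polyj_mono coefCM coefXn.
case: eqP => _; last by rewrite mulr0; apply: ideal0 (ideal_gen_is_ideal _).
by rewrite mulr1; apply: mem_ideal_gen; exists (mnm_contract j a); rewrite ?map_f.
Qed.

Lemma ext_ideal_powSr k x y :
  ext_ideal (ideal_pow J k) x -> ext_ideal J y -> ext_ideal (ideal_pow J k.+1) (x * y).
Proof.
move=> Jx Jy e; rewrite polyjM coefM.
apply: ideal_sum => [|i _]; first exact: ideal_pow_is_ideal.
by apply: ideal_powSr; [apply: Jx | apply: Jy].
Qed.

Lemma ideal_pow_sub_ext_contraction k x :
  ideal_pow I k x -> ext_ideal (ideal_pow J k) x.
Proof.
apply: (ideal_gen_min (A := ext_ideal (ideal_pow J k))).
  exact: ext_ideal_is_ideal (ideal_pow_is_ideal _ _).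
move=> _ [g [Ig ->]]; elim: k g Ig => [|k IH] g Ig.
  rewrite big_ord0 -(rmorph1 liftj); apply/ext_ideal_liftj.
    exact: ideal0 (ideal_pow_is_ideal _ _).
  exact: ideal_pow0.
rewrite big_ord_recr; apply: ext_ideal_powSr; first exact: IH.
exact: ideal_sub_ext_contraction.
Qed.

Lemma liftj_contraction x : J x -> I (liftj x * 'X_j ^+ N).
Proof.
apply: (ideal_gen_min (A := fun x => I (liftj x * 'X_j ^+ N))).
  exact: rmorph_preim_ideal (colon_is_ideal _ I_ideal).
move=> _ [_ /mapP [a a_s ->] ->]; rewrite /colon.
have le_aN : (a j <= N)%N by apply: leq_bigmax_seq.
rewrite -(subnKC le_aN) exprD mulrA liftj_mono mulrC.
by apply: idealMl => //; apply/I_gen/mem_ideal_gen; exists a.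
Qed.

Lemma liftj_contraction_pow k c :
  ideal_pow J k c -> ideal_pow I k (liftj c * 'X_j ^+ (k * N)).
Proof.
apply: (ideal_gen_min (A := fun c => ideal_pow I k (liftj c * 'X_j ^+ (k * N)))).
  exact: rmorph_preim_ideal (colon_is_ideal _ (ideal_pow_is_ideal _ _)).
move=> _ [g [Jg ->]]; rewrite /colon rmorph_prod.
have -> : \prod_(i < k) liftj (g i) * 'X_j ^+ (k * N) =
          \prod_(i < k) (liftj (g i) * 'X_j ^+ N).
  by rewrite big_split /= prodr_const card_ord -exprM mulnC.
by apply: ideal_pow_prod => i; apply: liftj_contraction.
Qed.

Lemma ext_contraction_pow_mulXj k g :
  ext_ideal (ideal_pow J k) g -> ideal_pow I k (g * 'X_j ^+ (k * N)).
Proof.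
move=> Jg; rewrite -(polyjK j g) /unpolyj horner_coef mulr_suml.
apply: ideal_sum => [|i _]; first exact: ideal_pow_is_ideal.
rewrite coef_map /= mulrAC mulrC; apply: idealMl; first exact: ideal_pow_is_ideal.
exact: liftj_contraction_pow.
Qed.

Lemma Ass_ext_contraction k P :
  Ass (ideal_pow J k) P -> Ass (ideal_pow I k) (ext_ideal P).
Proof.
move=> [P_prime [f P_colon]]; split; first exact: ext_ideal_prime.
exists (liftj f * 'X_j ^+ (k * N)) => g; rewrite /colon (mulrA g).
have ext_P : ext_ideal P g <-> ext_ideal (ideal_pow J k) (liftj f * g).
  rewrite ext_idealMliftj; split=> Pg e; have := Pg e; rewrite P_colon /colon mulrC //.
have J0 : ideal_pow J k 0 := ideal0 (ideal_pow_is_ideal _ _).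
split=> [/ext_P | /ideal_pow_sub_ext_contraction].
  by rewrite mulrC; apply: ext_contraction_pow_mulXj.
by move/(ext_idealMXj j _ _ J0); rewrite mulrC => /ext_P.
Qed.

Lemma Ass_contraction_of_ext k P : is_prime_ideal P ->
  Ass (ideal_pow I k) (ext_ideal P) -> Ass (ideal_pow J k) P.
Proof.
move=> P_prime [_ [g P_colon]]; split=> //.
have P0 : P 0 by case: P_prime => [[]].
have J0 : ideal_pow J k 0 := ideal0 (ideal_pow_is_ideal _ _).
have P_cap c : P c <->
    forall e, (e < size (polyj g))%N -> colon (ideal_pow J k) (polyj g)`_e c.
  split=> [Pc e _ | Jc].
    have /(ext_ideal_liftj j _ P0)/P_colon := Pc.
    by move/ideal_pow_sub_ext_contraction/ext_idealMliftj; apply.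
  have /ext_contraction_pow_mulXj : ext_ideal (ideal_pow J k) (liftj c * g).
    apply/ext_idealMliftj => e; have [/Jc // | le_size] := ltnP e (size (polyj g)).
    by rewrite nth_default // mulr0.
  rewrite mulrAC => /P_colon.
  by rewrite (ext_idealMXj j _ _ P0) (ext_ideal_liftj j _ P0).
have [e _ P_eq] := prime_ideal_cap_eq P_prime
  (fun e => colon_is_ideal _ (ideal_pow_is_ideal _ _)) P_cap.
by exists (polyj g)`_e.
Qed.

End Contraction.

Theorem corollary3p22 (K : fieldType) (n : nat) (j : 'I_n.+1)
    (I : {mpoly K[n.+1]} -> Prop) (s : seq 'X_{1..n.+1}) :
  minimal_monomial_gens I s ->
  copersistent I ->
  copersistent (@contraction K n j s).
Proof.
move=> [I_gen _] I_copersistent k k_ge1 P P_ass.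
apply: (Ass_contraction_of_ext I_gen); first by case: P_ass.
apply: (I_copersistent k k_ge1).
exact: Ass_ext_contraction.
Qed.
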